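(* Let $1,2,3,4$ be four distinct vertices of $G$ such that $G[\{1,2,3\}]$ has edge set exactly $\{12,23\}$, $G[\{2,3,4\}]$ has edge set exactly $\{23,24,34\}$, and $w_{23}\ge w_{24}$ (nothing is assumed about whether $14$ is an edge). If $\Gamma_G$ is population monotonic, then $w_{23}\ge w_{12}+w_{34}$ and $w_{23}\ge w_{24}+w_{34}$.
   Context: $G=(V,E;w)$ is a finite simple graph with edge weights $w:E\to\mathbb{R}$, $w_e>0$ for all $e\in E$; $w_{ij}$ denotes the weight of edge $ij$. The matching game on $G$ is the cooperative game $\Gamma_G=(N,\gamma)$ with player set $N=V$ and, for $S\subseteq N$, $\gamma(S)$ equal to the maximum weight of a matching in the induced subgraph $G[S]$ (so $\gamma(\emptyset)=0$). A population monotonic allocation scheme (PMAS) is a family $(\boldsymbol{x}_S)_{\emptyset\neq S\subseteq N}$ with $\boldsymbol{x}_S=(x_{S,i})_{i\in S}\in\mathbb{R}^S$ such that (efficiency) $\sum_{i\in S}x_{S,i}=\gamma(S)$ for every nonempty $S\subseteq N$, and (monotonicity) $x_{S,i}\le x_{T,i}$ whenever $\emptyset\ne S\subseteq T\subseteq N$ and $i\in S$. $\Gamma_G$ is called population monotonic if it admits a PMAS. *)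

From mathcomp Require Import all_boot all_order all_algebra.
Set Implicit Arguments. Unset Strict Implicit. Unset Printing Implicit Defensive.
Import Order.TTheory GRing.Theory Num.Theory.
Local Open Scope ring_scope.

(* A finite simple graph on vertex type T: symmetric irreflexive adjacency e.
   Edge weights are given as a function on 2-element vertex sets:
   w_{ij} := w [set i; j]. *)
Definition simple_graph (T : finType) (e : rel T) : Prop :=
  (forall x, ~~ e x x) /\ (forall x y, e x y = e y x).

Definition pos_weights (T : finType) (R : realFieldType) (e : rel T)
  (w : {set T} -> R) : Prop :=
  forall x y, e x y -> 0 < w [set x; y].

Definition is_edge_in (T : finType) (e : rel T) (S : {set T}) (f : {set T}) : bool :=
  [exists x, exists y, [&& x \in S, y \in S, e x y & f == [set x; y]]].

Definition is_matching (T : finType) (e : rel T) (S : {set T}) (M : {set {set T}}) : bool :=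
  [forall f in M, is_edge_in e S f] &&
  [forall f in M, forall g in M, (f != g) ==> [disjoint f & g]].

Definition gamma (T : finType) (R : realFieldType) (e : rel T) (w : {set T} -> R)
  (S : {set T}) : R :=
  \big[Num.max/0]_(M : {set {set T}} | is_matching e S M) \sum_(f in M) w f.

(* population monotonic allocation scheme: x S i is x_{S,i} (only meaningful for i in S) *)
Definition is_PMAS (T : finType) (R : realFieldType) (e : rel T) (w : {set T} -> R)
  (x : {set T} -> T -> R) : Prop :=
  (forall S : {set T}, S != set0 -> \sum_(i in S) x S i = gamma e w S) /\
  (forall S U : {set T}, S != set0 -> S \subset U -> forall i, i \in S -> x S i <= x U i).

Definition population_monotonic (T : finType) (R : realFieldType) (e : rel T)
  (w : {set T} -> R) : Prop :=
  exists x : {set T} -> T -> R, is_PMAS e w x.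

From mathcomp Require Import all_boot all_order all_algebra.
From mathcomp Require Import lra zify.
Set Implicit Arguments. Unset Strict Implicit.
Import Order.TTheory GRing.Theory Num.Theory.
Local Open Scope ring_scope.

(* Write a = w12, b = w23, c = w24, d = w34 and let x be a
   PMAS.  Two facts about the matching game are used:
   - on a vertex set of size at most 3 a matching has at most one edge, so
     gamma of such a set is bounded by its largest edge weight; hence
     gamma{1,2,3} <= max(a,b) and, as c <= b, gamma{2,3,4} <= max(b,d);
   - every edge weight is covered by the allocation of its two endpoints,
     and allocations are nonnegative (x_{U,i} >= x_{{i},i} = gamma{i} >= 0).
   By monotonicity, x_{123} dominates x_{12} on {1,2} and x_{23} on 3, so
   a + x_{23,3} <= max(a,b); likewise x_{234} dominates x_{23}, x_{24} and
   x_{34} coordinatewise.  Comparing these sums with the two upper bounds,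
   a linear case analysis on the two maxima yields b >= a + d and
   b >= c + d. *)

Section MatchingGame.
Variables (T : finType) (R : realFieldType) (e : rel T) (w : {set T} -> R).

Lemma gamma_ge_matching (S : {set T}) (M : {set {set T}}) :
  is_matching e S M -> \sum_(f in M) w f <= gamma e w S.
Proof. by move=> HM; apply: le_bigmax_cond. Qed.

Lemma gamma_ge0 (S : {set T}) : 0 <= gamma e w S.
Proof.
have : is_matching e S set0.
  by apply/andP; split; apply/forallP => f; rewrite in_set0.
by move/gamma_ge_matching; rewrite big_set0.
Qed.

Lemma gamma_ge_edge (S : {set T}) (a b : T) :
  a \in S -> b \in S -> e a b -> w [set a; b] <= gamma e w S.
Proof.
move=> aS bS eab.
have : is_matching e S [set [set a; b]].
  apply/andP; split; apply/forallP => f; apply/implyP; rewrite in_set1 => /eqP ->.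
    by apply/existsP; exists a; apply/existsP; exists b; rewrite aS bS eab eqxx.
  by apply/forallP => g; apply/implyP; rewrite in_set1 => /eqP ->; rewrite eqxx.
by move/gamma_ge_matching; rewrite big_set1.
Qed.

Hypothesis sg : simple_graph e.

Lemma edge_in_card2 (S f : {set T}) :
  is_edge_in e S f -> f \subset S /\ #|f| = 2%N.
Proof.
case/existsP=> a /existsP[b /and4P[aS bS eab /eqP ->]].
split; first by apply/subsetP => z; rewrite !inE => /orP[] /eqP ->.
rewrite cards2; case: eqP => // ab.
by move: eab; rewrite ab (negbTE (sg.1 b)).
Qed.

(* Two disjoint edges need four vertices, so on at most three vertices
   a matching has at most one edge. *)
Lemma small_matching_card (S : {set T}) (M : {set {set T}}) :
  (#|S| <= 3)%N -> is_matching e S M -> (#|M| <= 1)%N.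
Proof.
move=> cardS /andP[/forallP edgeM /forallP disjM].
rewrite leqNgt; apply/negP => /card_gt1P[f [g [fM gM fg]]].
have [fS cf] := edge_in_card2 (implyP (edgeM f) fM).
have [gS cg] := edge_in_card2 (implyP (edgeM g) gM).
have fg_disj : [disjoint f & g].
  by move: (disjM f); rewrite fM => /forallP/(_ g); rewrite gM fg.
have : (#|f :|: g| <= #|S|)%N by apply: subset_leq_card; rewrite subUset fS gS.
rewrite cardsU (disjoint_setI0 fg_disj) cards0 cf cg; lia.
Qed.

Lemma gamma_small_le (S : {set T}) (m : R) :
  (#|S| <= 3)%N -> 0 <= m ->
  (forall f, is_edge_in e S f -> w f <= m) -> gamma e w S <= m.
Proof.
move=> cardS m0 edge_le; apply: bigmax_le => // M HM.
have := small_matching_card cardS HM.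
rewrite leq_eqVlt ltnS leqn0 => /orP[/cards1P[f EM]|/eqP/cards0_eq ->].
  rewrite EM big_set1; apply: edge_le.
  by case/andP: HM => /forallP/(_ f); rewrite EM in_set1 eqxx.
by rewrite big_set0.
Qed.

Lemma card_triple (a b c : T) : (#|[set a; b; c]| <= 3)%N.
Proof. by rewrite setUC cardsU1 cards2; case: (_ \notin _); case: (_ != _). Qed.

Lemma gamma_triple_le (a b c : T) (m : R) : 0 <= m ->
  (e a b -> w [set a; b] <= m) -> (e a c -> w [set a; c] <= m) ->
  (e b c -> w [set b; c] <= m) -> gamma e w [set a; b; c] <= m.
Proof.
move=> m0 ab_le ac_le bc_le; apply: gamma_small_le => //; first exact: card_triple.
move=> f /existsP[y /existsP[z /and4P[yS zS eyz /eqP ->]]].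
have [irr sym] := sg.
(* Enumerate the ordered pairs (y, z) of the triple: loops are excluded by
   irreflexivity, reversed pairs are handled by symmetry of e and of sets. *)
move: yS zS eyz; rewrite !inE => /orP[/orP[]|] /eqP -> /orP[/orP[]|] /eqP -> eyz;
  rewrite ?(negbTE (irr _)) // in eyz;
  first [exact: ab_le eyz | exact: ac_le eyz | exact: bc_le eyz
        | rewrite setUC sym in eyz *;
          first [exact: ab_le eyz | exact: ac_le eyz | exact: bc_le eyz]].
Qed.

Lemma sum_pair (F : T -> R) (a b : T) :
  a != b -> \sum_(i in [set a; b]) F i = F a + F b.
Proof. by move=> ab; rewrite big_setU1 ?big_set1 // in_set1. Qed.

Lemma sum_triple (F : T -> R) (a b c : T) : a != b -> a != c -> b != c ->
  \sum_(i in [set a; b; c]) F i = F a + F b + F c.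
Proof.
move=> ab ac bc; rewrite setUC big_setU1 /=; first by rewrite sum_pair // addrC.
by rewrite !inE negb_or eq_sym ac eq_sym bc.
Qed.

Lemma triple_mem (a b c : T) :
  [/\ a \in [set a; b; c], b \in [set a; b; c] & c \in [set a; b; c]].
Proof. by split; rewrite !inE eqxx ?orbT. Qed.

Section Allocation.
Variable x : {set T} -> T -> R.
Hypothesis pmas : is_PMAS e w x.

Lemma pmas_mono (S U : {set T}) (i : T) :
  S \subset U -> i \in S -> x S i <= x U i.
Proof. by move=> SU iS; apply: pmas.2 => //; apply/set0Pn; exists i. Qed.

(* Allocations are nonnegative: x_{U,i} >= x_{{i},i} = gamma {i} >= 0. *)
Lemma pmas_ge0 (U : {set T}) (i : T) : i \in U -> 0 <= x U i.
Proof.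
move=> iU; have ne : [set i] != set0 by apply/set0Pn; exists i; rewrite set11.
have := pmas.1 _ ne; rewrite big_set1 => alloc_i.
have le_iU : x [set i] i <= x U i by apply: pmas_mono; rewrite ?sub1set ?set11.
by rewrite (le_trans _ le_iU) // alloc_i gamma_ge0.
Qed.

Lemma pmas_edge (a b : T) :
  e a b -> w [set a; b] <= x [set a; b] a + x [set a; b] b.
Proof.
move=> eab; have ab : a != b by apply: contraTneq eab => ->; exact: sg.1.
rewrite -sum_pair // pmas.1; last by apply/set0Pn; exists a; rewrite set21.
exact: gamma_ge_edge (set21 a b) (set22 a b) eab.
Qed.

Lemma pmas_pair_mono (a b : T) (U : {set T}) : a \in U -> b \in U ->
  x [set a; b] a <= x U a /\ x [set a; b] b <= x U b.
Proof.
move=> aU bU; have abU : [set a; b] \subset U.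
  by apply/subsetP => z; rewrite !inE => /orP[] /eqP ->.
by split; apply: pmas_mono; rewrite ?set21 ?set22.
Qed.

Lemma pmas_triple (a b c : T) : a != b -> a != c -> b != c ->
  x [set a; b; c] a + x [set a; b; c] b + x [set a; b; c] c
    = gamma e w [set a; b; c].
Proof.
move=> ab ac bc; rewrite -sum_triple // pmas.1 //.
by apply/set0Pn; exists a; case: (triple_mem a b c).
Qed.

End Allocation.
End MatchingGame.

Theorem mainTheorem3 (T : finType) (R : realFieldType) (e : rel T)
  (w : {set T} -> R) (v1 v2 v3 v4 : T) :
  simple_graph e -> pos_weights e w ->
  uniq [:: v1; v2; v3; v4] ->
  e v1 v2 -> e v2 v3 -> ~~ e v1 v3 ->
  e v2 v4 -> e v3 v4 ->
  w [set v2; v4] <= w [set v2; v3] ->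
  population_monotonic e w ->
  w [set v1; v2] + w [set v3; v4] <= w [set v2; v3] /\
  w [set v2; v4] + w [set v3; v4] <= w [set v2; v3].
Proof.
move=> sg pw uniq4 e12 e23 n13 e24 e34 c_le_b [x pmas].
move: uniq4; rewrite /= !inE !negb_or.
case/and4P=> [/and3P[n12 n13' _] /andP[n23 n24] n34 _].
have a_gt0 := pw _ _ e12; have b_gt0 := pw _ _ e23; have d_gt0 := pw _ _ e34.
have [in1 in2 in3] := triple_mem v1 v2 v3.
have [in2' in3' in4'] := triple_mem v2 v3 v4.
have alloc123 := pmas_triple pmas n12 n13' n23.
have alloc234 := pmas_triple pmas n23 n24 n34.
have gamma123 : gamma e w [set v1; v2; v3] <= Num.max (w [set v1; v2]) (w [set v2; v3]).
  by apply: gamma_triple_le => //; rewrite ?le_max ?lexx ?orbT ?(ltW a_gt0) // (negbTE n13).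
have gamma234 : gamma e w [set v2; v3; v4] <= Num.max (w [set v2; v3]) (w [set v3; v4]).
  by apply: gamma_triple_le => //; rewrite ?le_max ?lexx ?c_le_b ?orbT ?(ltW b_gt0).
(* Edge coverage, monotonicity from pairs into both triples, x_{234,4} >= 0. *)
have := pmas_edge sg pmas e12; have := pmas_edge sg pmas e23.
have := pmas_edge sg pmas e24; have := pmas_edge sg pmas e34.
have [] := pmas_pair_mono pmas in1 in2; have [] := pmas_pair_mono pmas in2 in3.
have [] := pmas_pair_mono pmas in2' in3'; have [] := pmas_pair_mono pmas in2' in4'.
have [] := pmas_pair_mono pmas in3' in4'; have := pmas_ge0 pmas in4'.
(* All remaining steps are linear once each maximum is resolved. *)
move: gamma123 gamma234; rewrite !le_max => /orP[] ? /orP[] ? *; split; lra.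
Qed.
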